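(* Let $\ell\ge2$, let $A_1,\dots,A_\ell$ be pairwise disjoint finite nonempty sets, $V=A_1\cup\dots\cup A_\ell$, and $\mathcal A=\{A_1,\dots,A_\ell\}$. Let $\mathcal S$ be a family of $\ell$-element subsets of $V$ with $|S\cap A_i|=1$ for all $S\in\mathcal S$ and all $i$, such that $|S\setminus T|$ is odd for all distinct $S,T\in\mathcal S$. For $X\subseteq V$ let $\vec X\in\mathbb F_2^V$ be its characteristic vector. Suppose $|\mathcal S|$ is odd and the vectors $\{\vec X: X\in\mathcal S\cup\mathcal A\}$ satisfy a nontrivial linear dependency $\sum_{X\in\mathcal S\cup\mathcal A}\alpha(X)\vec X=0$ with $\alpha(X)\in\mathbb F_2$ not all zero. Then this dependency is unique and $\alpha(X)=1$ for every $X\in\mathcal S\cup\mathcal A$.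
   Context: $\mathbb F_2$ is the two-element field. *)

From HB Require Import structures.
From mathcomp Require Import all_boot all_order all_algebra.
Set Implicit Arguments. Unset Strict Implicit. Unset Printing Implicit Defensive.
Import GRing.Theory.
Local Open Scope ring_scope.

Definition charvec (V : finType) (X : {set V}) : {ffun V -> ('F_2)^o} :=
  [ffun v => (v \in X)%:R].

(* Pair the dependency with the characteristic vector of a set Y: over F_2 this
   gives sum_X alpha(X) |X ∩ Y| = 0.  For Y = T in 𝒮, the transversal condition
   makes |A_i ∩ T| = 1 and the oddness of |S \ T| makes |S ∩ T| = l + 1 + [S = T]
   mod 2, so alpha is constant, say k, on 𝒮; as |𝒮| is odd, sum_{S ∈ 𝒮} alpha(S) = k.
   If k = 0 then evaluating the dependency at a point of A_j gives alpha(A_j) = 0,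
   so the dependency is trivial.  Hence k = 1, and pairing with Y = A_j gives
   alpha(A_j) |A_j| = 1, i.e. alpha(A_j) = 1. *)

From HB Require Import structures.
From mathcomp Require Import all_boot all_order all_algebra.
Import GRing.Theory.
Local Open Scope ring_scope.

Lemma F2_nat n : (n%:R : 'F_2) = (odd n)%:R.
Proof. by rewrite -Fp_nat_mod // modn2. Qed.

Lemma F2_addr_eq0 (a b : 'F_2) : (a + b == 0) = (a == b).
Proof. by rewrite addr_eq0 oppr_pchar2 // pchar_Fp. Qed.

Lemma F2_neq0 (a : 'F_2) : (a != 0) = (a == 1).
Proof. by case: a => [[|[|]]]. Qed.

Lemma odd_setI_setD (V : finType) (S T : {set V}) :
  odd #|S :\: T| -> odd #|S :&: T| = ~~ odd #|S|.
Proof. by rewrite -(cardsID T S) oddD => ->; rewrite addbT negbK. Qed.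

Lemma sum_mem_card (R : pzSemiRingType) (V : finType) (X Y : {set V}) :
  \sum_(v in Y) ((v \in X)%:R : R) = #|X :&: Y|%:R.
Proof.
rewrite (bigID (mem X)) /= [X in _ + X]big1 ?addr0 => [|v /andP[_ /negbTE ->]] //.
rewrite (eq_bigr (fun _ => 1)) => [|v /andP[_ ->]] //.
by rewrite sumr_const; congr _%:R; apply: eq_card => v; rewrite !inE andbC.
Qed.

Section CharvecDependency.
Context {V : finType} {F : {set {set V}}} {alpha : {set V} -> 'F_2}.
Hypothesis dep : \sum_(X in F) alpha X *: charvec X = 0.

Lemma charvec_dependency_mem v : \sum_(X in F) alpha X * (v \in X)%:R = 0.
Proof.
transitivity ((\sum_(X in F) alpha X *: charvec X) v); last by rewrite dep ffunE.
by rewrite sum_ffunE; apply: eq_bigr => X _; rewrite !ffunE.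
Qed.

Lemma charvec_dependency_cardI Y : \sum_(X in F) alpha X * #|X :&: Y|%:R = 0.
Proof.
under eq_bigr => X _ do rewrite -sum_mem_card mulr_sumr.
by rewrite exchange_big /= big1 // => v _; apply: charvec_dependency_mem.
Qed.

End CharvecDependency.

Section TransversalsOfPartition.
Context {l : nat} {V : finType} {A : 'I_l -> {set V}} {SS : {set {set V}}}.
Hypothesis l_ge2 : (2 <= l)%N.
Hypothesis A_disjoint : forall i j, i != j -> [disjoint A i & A j].
Hypothesis A_neq0 : forall i, A i != set0.
Hypothesis cardS : forall S, S \in SS -> #|S| = l.
Hypothesis cardSA : forall S i, S \in SS -> #|S :&: A i| = 1%N.

Local Notation blocks := [set A i | i : 'I_l].

Lemma setI_blocks i j : i != j -> A i :&: A j = set0.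
Proof. by move/A_disjoint; rewrite -setI_eq0 => /eqP. Qed.

Lemma blocks_inj : injective A.
Proof.
move=> i j eqA; apply/eqP; apply: contraTT (A_neq0 j) => /setI_blocks.
by rewrite eqA setIid => ->; rewrite eqxx.
Qed.

Lemma transversals_blocks_disjoint : [disjoint SS & blocks].
Proof.
rewrite disjoint_sym; apply/pred0P => Y /=.
apply/negbTE/andP => -[/imsetP[i _ ->] SAi].
have [j ji] : exists j : 'I_l, j != i.
  case: (eqVneq i (Ordinal l_ge2)) => [-> | ?]; first by exists (Ordinal (ltnW l_ge2)).
  by exists (Ordinal l_ge2); rewrite eq_sym.
by have := cardSA _ j SAi; rewrite setIC setI_blocks // cards0.
Qed.

Lemma big_transversals_blocks (R : nmodType) (G : {set V} -> R) :
  \sum_(X in SS :|: blocks) G X = \sum_(S in SS) G S + \sum_(i < l) G (A i).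
Proof.
rewrite (eq_bigl [predU SS & blocks]) => [|X]; last by rewrite !inE.
by rewrite bigU ?transversals_blocks_disjoint // big_imset //= => i j _ _ /blocks_inj.
Qed.

Hypothesis oddSD : forall S T, S \in SS -> T \in SS -> S != T -> odd #|S :\: T|.

Lemma transversal_cardI S T : S \in SS -> T \in SS ->
  (#|S :&: T|%:R : 'F_2) = l.+1%:R + (S == T)%:R.
Proof.
move=> SS_S SS_T; rewrite -natrD F2_nat [RHS]F2_nat; congr _%:R.
have [-> | ST] := eqVneq S T; first by rewrite setIid cardS // addn1 /= negbK.
by rewrite odd_setI_setD ?oddSD // cardS // addn0.
Qed.

Context {alpha : {set V} -> 'F_2}.
Hypothesis dep : \sum_(X in SS :|: blocks) alpha X *: charvec X = 0.

Lemma alpha_transversal_const T : T \in SS ->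
  alpha T = l.+1%:R * \sum_(S in SS) alpha S + \sum_(i < l) alpha (A i).
Proof.
move=> SS_T; apply/eqP; rewrite -F2_addr_eq0; apply/eqP.
have := charvec_dependency_cardI dep T; rewrite big_transversals_blocks.
under eq_bigr => S SS_S do rewrite transversal_cardI // mulrDr.
under [\sum_(i < l) _]eq_bigr => i _ do rewrite setIC cardSA // mulr1.
have delta : \sum_(S in SS) alpha S * (S == T)%:R = alpha T.
  rewrite (bigD1 T) //= eqxx mulr1 big1 ?addr0 // => S /andP[_ /negbTE ->].
  by rewrite mulr0.
rewrite big_split /= delta -mulr_suml => h; rewrite -[RHS]h.
by rewrite mulrC addrCA addrA.
Qed.

Lemma alpha_transversal : odd #|SS| ->
  forall T, T \in SS -> alpha T = \sum_(S in SS) alpha S.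
Proof.
move=> oddSS T SS_T; rewrite (eq_bigr _ alpha_transversal_const) sumr_const.
by rewrite -[_ *+ #|SS|]mulr_natr [#|SS|%:R]F2_nat oddSS mulr1; apply: alpha_transversal_const.
Qed.

Lemma alpha_block_mem j v : v \in A j ->
  alpha (A j) = \sum_(S in SS) alpha S * (v \in S)%:R.
Proof.
move=> vAj; apply/eqP; rewrite -F2_addr_eq0 addrC.
have := charvec_dependency_mem dep v; rewrite big_transversals_blocks (bigD1 j) //=.
rewrite vAj mulr1 [\sum_(i < l | i != j) _]big1 ?addr0 => [-> // | i ij].
have /setP/(_ v) := setI_blocks _ _ ij; rewrite !inE vAj andbT => ->.
by rewrite mulr0.
Qed.

Lemma alpha_block_card j : alpha (A j) * #|A j|%:R = \sum_(S in SS) alpha S.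
Proof.
apply/eqP; rewrite -F2_addr_eq0 addrC.
have := charvec_dependency_cardI dep (A j); rewrite big_transversals_blocks.
under eq_bigr => S SS_S do rewrite cardSA // mulr1.
rewrite (bigD1 j) //= setIid [\sum_(i < l | i != j) _]big1 ?addr0 => [-> // | i ij].
by rewrite setI_blocks // cards0 mulr0.
Qed.

End TransversalsOfPartition.

Theorem lemma3p2 (l : nat) (V : finType) (A : 'I_l -> {set V})
  (SS : {set {set V}}) (alpha : {set V} -> 'F_2) :
  (2 <= l)%N ->
  (forall i j, i != j -> [disjoint A i & A j]) ->
  (forall i, A i != set0) ->
  \bigcup_(i < l) A i = [set: V] ->
  (forall S, S \in SS -> #|S| = l) ->
  (forall S i, S \in SS -> #|S :&: A i| = 1%N) ->
  (forall S T, S \in SS -> T \in SS -> S != T -> odd #|S :\: T|) ->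
  odd #|SS| ->
  \sum_(X in SS :|: [set A i | i : 'I_l]) alpha X *: charvec X = 0 ->
  (exists2 X, X \in SS :|: [set A i | i : 'I_l] & alpha X != 0) ->
  forall X, X \in SS :|: [set A i | i : 'I_l] -> alpha X = 1.
Proof.
move=> l_ge2 disjA A_neq0 _ cardS cardSA oddSD oddSS dep [X0 X0_in alphaX0_neq0].
have alphaS := alpha_transversal l_ge2 disjA A_neq0 cardS cardSA oddSD dep oddSS.
have alphaA_mem := alpha_block_mem l_ge2 disjA A_neq0 cardSA dep.
have alphaA_card := alpha_block_card l_ge2 disjA A_neq0 cardSA dep.
have [c0 | ] := eqVneq (\sum_(S in SS) alpha S) 0.
  suff alpha0 Y : Y \in SS :|: [set A i | i : 'I_l] -> alpha Y = 0.
    by rewrite alpha0 ?eqxx in alphaX0_neq0.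
  case/setUP => [/alphaS -> // | /imsetP[j _ ->]].
  have /set0Pn[v vAj] := A_neq0 j.
  by rewrite (alphaA_mem _ _ vAj) big1 // => S /alphaS ->; rewrite c0 mul0r.
rewrite F2_neq0 => /eqP c1 X /setUP[/alphaS -> // | /imsetP[j _ ->]].
apply/eqP; rewrite -F2_neq0; apply/eqP => alphaA0.
by have := alphaA_card j; rewrite alphaA0 mul0r c1 => /eqP; rewrite eq_sym oner_eq0.
Qed.
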